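(* Let $A$ be an essential arrangement of affine hyperplanes in a real affine space $V$, $f_0$ a non-constant affine-linear function, and for large $t$ let $A_t=A\cup\{\{f_0=t\}\}$. Let $H=\{f=0\}$ belong to $A$, let $\alpha\in\mathbb C$, let $\Delta$ be a growing domain of $A$, $\Delta_t=\Delta\cap\{f_0<t\}$ the corresponding bounded domain of $A_t$, and $g$ a branch of $f^\alpha$ on $\Delta$. Then $|f|$ is bounded on $\Delta$ if and only if $tr(\Delta)\subset tr(H)$, and this condition is equivalent to $h$ vanishing on $tr(\Delta)$, where $h=f^0/f_0^0$. Moreover, if $|f|$ is bounded on $\Delta$, then for every sufficiently large $t$, $c(g,\Delta_t)=c(g,\Delta,f_0)$.
   Context: Domains and faces are as usual, and a domain is growing if it is unbounded and $f_0\to+\infty$ at infinity within it. In the projective completion $\bar V=V\cup H_\infty$, $tr(H)=\bar H\cap H_\infty$, and $tr(\Delta)$ is the face of highest dimension among faces of $\bar A$ lying in $H_\infty$ contained in $\bar\Delta\cap H_\infty$. $h([v])=f^0(v)/f_0^0(v)$ is defined on $H_\infty\setminus\overline{\{f_0=0\}}$, where $f^0$ is the linear part. The external support of a face $D$ on which $|f|$ is bounded is the face of highest dimension in the set of points of $\bar D$ where $|f|$ is maximal. $c(g,\Delta_t)$ is the value of $g$ on the external support of $\Delta_t$ (in $A_t$) with respect to $f$, and when $|f|$ is bounded on $\Delta$, $c(g,\Delta,f_0)$ is the value of $g$ on the external support of $\Delta$ (in $A$) with respect to $f$. *)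

From HB Require Import structures.
From mathcomp Require Import all_boot all_order all_algebra.
From mathcomp Require Import all_classical all_reals all_analysis.
From mathcomp Require Import complex.
Set Implicit Arguments. Unset Strict Implicit. Unset Printing Implicit Defensive.
Import Order.TTheory GRing.Theory Num.Theory.
Import numFieldNormedType.Exports.
Local Open Scope classical_set_scope.
Local Open Scope ring_scope.

Section Arrangements.
Variables (R : realType) (n : nat).
Local Notation V := 'rV[R]_n.

(* An affine-linear function x |-> <a, x> + b on V = R^n, stored as (a, b). *)
Definition aff := (V * R)%type.

Definition lin_eval (f : aff) (v : V) : R := \sum_(i < n) f.1 0 i * v 0 i.
Definition aff_eval (f : aff) (x : V) : R := lin_eval f x + f.2.

Definition nonconstant (f : aff) : bool := f.1 != 0.

Definition zeroset (f : aff) : set V := [set x | aff_eval f x = 0].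

(* An arrangement: a finite list of nonconstant affine functions, representing
   the hyperplanes {f = 0}. *)
Definition arrangement (A : seq aff) : Prop := all nonconstant A.

Definition essential (A : seq aff) : Prop := span (map fst A) = fullv.

Definition hyperplane_of (A : seq aff) (f : aff) : Prop :=
  nonconstant f /\ exists h, h \in A /\ zeroset f = zeroset h.

Definition arr_t (A : seq aff) (f0 : aff) (t : R) : seq aff :=
  rcons A (f0.1, f0.2 - t).

Definition arr_compl (A : seq aff) : set V :=
  [set x | forall h, h \in A -> aff_eval h x != 0].

Definition is_domain (A : seq aff) (D : set V) : Prop :=
  exists2 x, arr_compl A x & D = connected_component (arr_compl A) x.

Definition growing (f0 : aff) (D : set V) : Prop :=
  (forall r : R, exists2 x, D x & r < `|x|) /\
  (forall M : R, exists r : R, forall x, D x -> r <= `|x| -> M <= aff_eval f0 x).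

Definition signvec (A : seq aff) (x : V) : seq R :=
  map (fun h => Num.sg (aff_eval h x)) A.

Definition face (A : seq aff) (F : set V) : Prop :=
  exists x, F = [set y | signvec A y = signvec A x].

Definition ldim (S : set V) : nat :=
  \max_(k < n.+1 | `[< exists s : seq V,
        [/\ size s = k, (forall v, v \in s -> S v) & free s] >]) k.

Definition adim (S : set V) : nat :=
  ldim [set v | exists x y, [/\ S x, S y & v = x - y]].

(* A point of H_oo = P(V) is represented by any nonzero vector v (the point
   [v : 0] in homogeneous coordinates); subsets of H_oo are represented by
   sets of nonzero vectors stable under nonzero scaling. *)

(* \bar D n H_oo : the points [v:0] that are limits in the projective
   completion of points [x_k : 1] with x_k in D, i.e. c_k (x_k, 1) -> (v, 0)
   for some scalars c_k. *)
Definition inf_closure (D : set V) : set V :=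
  [set v : V | v != 0 /\ exists (x : nat -> V) (c : nat -> R),
     [/\ forall k, D (x k), c @ \oo --> (0 : R) &
         (fun k => c k *: x k) @ \oo --> (v : V)]].

Definition trH (f : aff) : set V := inf_closure (zeroset f).

Definition lsignvec (A : seq aff) (v : V) : seq R :=
  map (fun h => Num.sg (lin_eval h v)) A.

(* faces of \bar A lying in H_oo (cells of the induced projective
   arrangement {tr(H) : H in A} of H_oo; signs are defined up to a global
   sign in projective space). *)
Definition face_inf (A : seq aff) (F : set V) : Prop :=
  exists2 v, v != 0 &
    F = [set w | w != 0 /\ (lsignvec A w = lsignvec A v \/
                           lsignvec A w = lsignvec A (- v))].

Definition pdim (F : set V) : nat := (ldim F).-1.

Definition is_tr (A : seq aff) (D : set V) (F : set V) : Prop :=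
  [/\ face_inf A F, F `<=` inf_closure D &
      forall F', face_inf A F' -> F' `<=` inf_closure D -> (pdim F' <= pdim F)%N].

(* h([v]) = f^0(v) / f0^0(v), defined on H_oo minus the closure of {f0 = 0} *)
Definition hfun (f f0 : aff) (v : V) : R := lin_eval f v / lin_eval f0 v.

Definition h_vanishes_on (f f0 : aff) (F : set V) : Prop :=
  forall v, F v -> ~ trH f0 v /\ hfun f f0 v = 0.

Local Open Scope complex_scope.
Definition cexp (z : R[i]) : R[i] :=
  (expR (complex.Re z) * cos (complex.Im z)) +i* (expR (complex.Re z) * sin (complex.Im z)).

Definition branch (f : aff) (alpha : R[i]) (D : set V) (g : V -> R[i]) : Prop :=
  exists L : V -> R[i],
    [/\ {within D, continuous (fun x => complex.Re (L x))},
        {within D, continuous (fun x => complex.Im (L x))},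
        forall x, D x -> cexp (L x) = (aff_eval f x)%:C &
        forall x, D x -> g x = cexp (alpha * L x)].
Local Close Scope complex_scope.

Definition maxset (f : aff) (D : set V) : set V :=
  [set x | closure D x /\ forall y, closure D y -> `|aff_eval f y| <= `|aff_eval f x|].

Definition ext_supp (A : seq aff) (f : aff) (D : set V) (F : set V) : Prop :=
  [/\ face A F, F `<=` maxset f D &
      forall F', face A F' -> F' `<=` maxset f D -> (adim F' <= adim F)%N].

Definition ext_value (A : seq aff) (f : aff) (g : V -> R[i]) (D : set V) (c : R[i])
  : Prop :=
  (exists F, ext_supp A f D F) /\
  forall F, ext_supp A f D F -> forall p, F p ->
    ((fun x => complex.Re (g x)) @ within D (nbhs p) --> complex.Re c) /\
    ((fun x => complex.Im (g x)) @ within D (nbhs p) --> complex.Im c).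

Definition f_bounded_on (f : aff) (D : set V) : Prop :=
  exists M : R, forall x, D x -> `|aff_eval f x| <= M.

End Arrangements.

(* A domain Delta of the arrangement is the open polyhedron cut out by the signs
   of the hyperplanes at one of its points x0: its closure is the closed
   polyhedron and its points at infinity are the +-v with v <> 0 in its
   recession cone C.  As f0 grows on Delta, f0^0 > 0 on C \ {0}, so
   h = f^0 / f0^0 is defined on tr(Delta) and vanishes where f^0 does.
   If f^0 v <> 0 for some v in C, |f| is unbounded along the ray x0 + k v;
   otherwise the affine function sg(f(x0)) f = |f| attains its maximum on the
   closed polyhedron, by a simplex-like walk towards points where f is constant
   on their face.  By maximality of the dimension of tr(Delta), f^0 vanishes on
   tr(Delta) iff it vanishes on C, i.e. iff tr(Delta) is contained in tr(H).
   Finally g = exp (alpha (ln |f| + i theta)) for a constant theta, so g has the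
   same limit at all points of maximal |f|; for t > f0(p), p such a point, the
   face of p remains a face of maximal |f| for Delta_t. *)

From Pilot Require Import Defs.
From HB Require Import structures.
From mathcomp Require Import all_boot all_order all_algebra.
From mathcomp Require Import all_classical all_reals all_analysis.
From mathcomp Require Import complex.
From mathcomp Require Import zify ring lra.
Import Order.TTheory GRing.Theory Num.Theory.
Import numFieldNormedType.Exports.
Local Open Scope classical_set_scope.
Local Open Scope ring_scope.

Set Implicit Arguments. Unset Strict Implicit. Unset Printing Implicit Defensive.

Section AffineFunctions.
Variables (R : realType) (n : nat).
Local Notation V := 'rV[R]_n.
Implicit Types (f : aff R n) (u v x y : V).

Lemma lin_evalD f u v : lin_eval f (u + v) = lin_eval f u + lin_eval f v.
Proof. by rewrite /lin_eval -big_split; apply: eq_bigr => i _; rewrite mxE mulrDr. Qed.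

Lemma lin_evalZ f a u : lin_eval f (a *: u) = a * lin_eval f u.
Proof. by rewrite /lin_eval mulr_sumr; apply: eq_bigr => i _; rewrite mxE mulrCA. Qed.

Lemma lin_evalN f u : lin_eval f (- u) = - lin_eval f u.
Proof. by rewrite -scaleN1r lin_evalZ mulN1r. Qed.

Lemma lin_eval0 f : lin_eval f 0 = 0.
Proof. by rewrite -(scale0r 0) lin_evalZ mul0r. Qed.

Lemma aff_evalD f x v : aff_eval f (x + v) = aff_eval f x + lin_eval f v.
Proof. by rewrite /aff_eval lin_evalD addrAC. Qed.

Lemma aff_eval_sub f x y : aff_eval f x - aff_eval f y = lin_eval f (x - y).
Proof. by rewrite /aff_eval lin_evalD lin_evalN; ring. Qed.

Lemma aff_eval_segment f x y s :
  aff_eval f (x + s *: (y - x)) = (1 - s) * aff_eval f x + s * aff_eval f y.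
Proof. by rewrite aff_evalD lin_evalZ -aff_eval_sub; ring. Qed.

Lemma lin_eval_continuous f : continuous (lin_eval f).
Proof.
rewrite /lin_eval; apply: (@continuous_big _ _ +%R) => [|i _ v].
  exact: add_continuous.
by apply: continuousM; [exact: cst_continuous | exact: coord_continuous].
Qed.

Lemma aff_eval_continuous f : continuous (aff_eval f).
Proof.
rewrite /aff_eval => x.
by apply: continuousD; [exact: lin_eval_continuous | exact: cst_continuous].
Qed.

Lemma nonconstant_zeroset f : nonconstant f -> exists p, aff_eval f p = 0.
Proof.
move=> nf; have ff_neq0 : lin_eval f f.1 != 0.
  rewrite /lin_eval; under eq_bigr do rewrite -expr2.
  apply: contra nf; rewrite psumr_eq0 => [/allP ff0|i _]; last exact: sqr_ge0.
  apply/eqP/rowP => i; rewrite mxE; apply/eqP; rewrite -sqrf_eq0.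
  exact: ff0 i (mem_index_enum _).
exists ((- f.2 / lin_eval f f.1) *: f.1).
by rewrite /aff_eval lin_evalZ divfK // addNr.
Qed.

Definition aff_scale (a : R) f : aff R n := (a *: f.1, a * f.2).

Lemma lin_eval_scale a f v : lin_eval (aff_scale a f) v = a * lin_eval f v.
Proof. by rewrite /lin_eval mulr_sumr; apply: eq_bigr => i _; rewrite mxE mulrA. Qed.

Lemma aff_eval_scale a f x : aff_eval (aff_scale a f) x = a * aff_eval f x.
Proof. by rewrite /aff_eval lin_eval_scale mulrDr. Qed.

End AffineFunctions.

Section PointsAtInfinity.
Variables (R : realType) (n : nat).
Local Notation V := 'rV[R]_n.

Lemma inf_closure_ray (D : set V) p v e : e != 0 -> v != 0 ->
  (forall k : nat, D (p + k%:R *: v)) -> inf_closure D (e *: v).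
Proof.
move=> e0 v0 Dray; split; first by rewrite scaler_eq0 negb_or e0 v0.
exists (fun k => p + k.+1%:R *: v), (fun k => e * k.+1%:R^-1); split => //.
  by rewrite -(mulr0 e); apply: cvgMl_tmp; exact: cvg_harmonic.
have -> : (fun k => (e * k.+1%:R^-1) *: (p + k.+1%:R *: v)) =
    (fun k => (e * k.+1%:R^-1) *: p + e *: v).
  by apply: funext => k; rewrite scalerDr scalerA mulfVK ?pnatr_eq0.
rewrite -[X in _ --> X]add0r; apply: cvgD; last exact: cvg_cst.
rewrite -(scale0r p) -(mulr0 e); apply: cvgZr_tmp; apply: cvgMl_tmp.
exact: cvg_harmonic.
Qed.

Lemma inf_closure_aff_cvg (h : aff R n) (x : nat -> V) (c : nat -> R) v :
  c @ \oo --> 0 -> (fun k => c k *: x k) @ \oo --> v ->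
  (fun k => c k * aff_eval h (x k)) @ \oo --> lin_eval h v.
Proof.
move=> c0 cx.
have -> : (fun k => c k * aff_eval h (x k)) =
    (fun k => lin_eval h (c k *: x k) + c k * h.2).
  by apply: funext => k; rewrite lin_evalZ mulrDr.
rewrite -[X in _ --> X]addr0; apply: cvgD.
  by apply: (cvg_comp _ _ cx); exact: lin_eval_continuous.
by rewrite -(mul0r h.2); exact: cvgMr_tmp.
Qed.

Lemma trHP (f : aff R n) v : nonconstant f -> trH f v <-> v != 0 /\ lin_eval f v = 0.
Proof.
move=> nf; split => [[v0 [x [c [fx c0 cv]]]]|[v0 fv]].
  split => //; have := inf_closure_aff_cvg (h := f) c0 cv.
  have -> : (fun k => c k * aff_eval f (x k)) = fun=> 0.
    by apply: funext => k; rewrite fx mulr0.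
  by move=> lim; exact: (cvg_unique (@Rhausdorff R) lim (cvg_cst _)).
have [p fp] := nonconstant_zeroset nf.
rewrite -[v]scale1r; apply: (inf_closure_ray (p := p)) => // k.
by rewrite /zeroset /= aff_evalD lin_evalZ fv mulr0 addr0.
Qed.

End PointsAtInfinity.

Lemma connected_sgr_mul_gt0 (T : topologicalType) (R : realType) (D : set T)
    (phi : T -> R) a :
  connected D -> {within D, continuous phi} -> (forall x, D x -> phi x != 0) ->
  D a -> forall x, D x -> 0 < Num.sg (phi a) * phi x.
Proof.
move=> cD cphi nz Da x Dx.
have /connected_intervalP img := connected_continuous_connected cD cphi.
have no_sign_change u v : D u -> D v -> phi u < 0 -> 0 < phi v -> False.
  move=> Du Dv hu hv.
  have [w Dw w0] := img _ _ (ex_intro2 _ _ u Du erefl) (ex_intro2 _ _ v Dv erefl) 0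
    (ltac:(by rewrite !ltW)).
  by move: (nz w Dw); rewrite w0 eqxx.
have := nz a Da; have := nz x Dx.
case: (ltrgtP (phi a) 0) => ha; case: (ltrgtP (phi x) 0) => hx // _ _.
- by rewrite ltr0_sg // mulN1r oppr_gt0.
- by case: (no_sign_change a x).
- by case: (no_sign_change x a).
- by rewrite gtr0_sg // mul1r.
Qed.

Lemma closure_ge0 (T : topologicalType) (R : realType) (D : set T) (phi : T -> R) :
  continuous phi -> (forall x, D x -> 0 < phi x) ->
  forall y, closure D y -> 0 <= phi y.
Proof.
move=> cphi pos y Dy; rewrite leNgt; apply/negP => hy.
have [x [Dx hx]] := Dy _ (cvgr_lt _ (cphi y) 0 hy).
by move: (pos x Dx); rewrite ltNge (ltW hx).
Qed.

Section Chamber.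
Variables (R : realType) (n : nat) (A : seq (aff R n)) (x0 : 'rV[R]_n).
Local Notation V := 'rV[R]_n.
Hypothesis Ax0 : arr_compl A x0.

Definition side (h : aff R n) : R := Num.sg (aff_eval h x0).

Definition chamber : set V :=
  [set x | forall h, h \in A -> 0 < side h * aff_eval h x].
Definition closed_chamber : set V :=
  [set x | forall h, h \in A -> 0 <= side h * aff_eval h x].
Definition rec_cone : set V :=
  [set v | forall h, h \in A -> 0 <= side h * lin_eval h v].

Lemma side_neq0 h : h \in A -> side h != 0.
Proof. by move=> hA; rewrite sgr_eq0 Ax0. Qed.

Lemma chamber_x0 : chamber x0.
Proof. by move=> h hA; rewrite -normrEsg normr_gt0 Ax0. Qed.

Lemma chamber_compl : chamber `<=` arr_compl A.
Proof.
move=> x Cx h hA; apply: contraTneq (Cx h hA) => ->.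
by rewrite mulr0 ltxx.
Qed.

Lemma chamber_closed_chamber : chamber `<=` closed_chamber.
Proof. by move=> x Cx h /Cx /ltW. Qed.

Lemma closed_chamber_segment x y s : closed_chamber x -> chamber y -> 0 < s <= 1 ->
  chamber (x + s *: (y - x)).
Proof.
move=> Kx Cy /andP[s0 s1] h hA.
rewrite aff_eval_segment mulrDr mulrCA [side h * (s * _)]mulrCA.
by apply: ltr_wpDl; [rewrite mulr_ge0 ?subr_ge0 ?Kx | rewrite mulr_gt0 ?Cy].
Qed.

Lemma component_chamber : connected_component (arr_compl A) x0 = chamber.
Proof.
apply/seteqP; split => [x Cx h hA|y Cy].
  apply: (connected_sgr_mul_gt0 (D := connected_component (arr_compl A) x0)) => //.
  - exact: component_connected.
  - exact/continuous_subspaceT/aff_eval_continuous.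
  - by move=> z /connected_component_sub /(_ h hA).
  - exact: connected_component_refl.
pose B := [set x0 + s *: (y - x0) | s in `[(0 : R), 1]].
apply: (connected_component_max (B := B)).
- by exists 0; [rewrite /= in_itv /= lexx ler01 | rewrite scale0r addr0].
- move=> _ [s /= /[!in_itv] /= /andP[s0 s1] <-].
  apply: chamber_compl; case: (ltrgtP s 0) => [|s_gt0|->]; first by rewrite ltNge s0.
    apply: closed_chamber_segment; rewrite ?s_gt0 //.
    exact/chamber_closed_chamber/chamber_x0.
  by rewrite scale0r addr0; exact: chamber_x0.
- apply: connected_continuous_connected; first exact: segment_connected.
  apply/continuous_subspaceT => s; apply: cvgD; first exact: cvg_cst.
  exact: cvgZr_tmp.
- by exists 1; [rewrite /= in_itv /= lexx ler01 | rewrite scale1r addrC subrK].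
Qed.

Lemma chamber_connected : connected chamber.
Proof. by rewrite -component_chamber; exact: component_connected. Qed.

Lemma closed_chamber_closureI y P :
  closed_chamber y -> nbhs y P -> closure (chamber `&` P) y.
Proof.
move=> Ky yP B yB.
have seg : (fun s : R => y + s *: (x0 - y)) @ 0^'+ --> y.
  apply: cvg_at_right_filter; rewrite -[X in _ --> X]addr0 -(scale0r (x0 - y)).
  by apply: cvgD; [exact: cvg_cst | exact: cvgZr_tmp].
near (0 : R)^'+ => s.
exists (y + s *: (x0 - y)); split; [split|].
- apply: closed_chamber_segment => //; first exact: chamber_x0.
  by apply/andP; split; near: s; [exact: nbhs_right_gt | exact: nbhs_right_le].
- by near: s; exact: seg _ yP.
- by near: s; exact: seg _ yB.
Unshelve. all: by end_near.
Qed.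

Lemma closure_chamber : closure chamber = closed_chamber.
Proof.
apply/seteqP; split => [y Dy h hA|y Ky].
  apply: (closure_ge0 (phi := fun x => side h * aff_eval h x)) Dy => [x|x Cx].
    exact/(@cvgMl_tmp _ _ (nbhs x) (nbhs_filter x))/aff_eval_continuous.
  exact: Cx h hA.
by rewrite -[chamber]setIT; apply: closed_chamber_closureI => //; exact: filterT.
Qed.

Lemma ray_in_chamber v k : rec_cone v -> 0 <= k -> chamber (x0 + k *: v).
Proof.
move=> Cv k0 h hA; rewrite aff_evalD lin_evalZ mulrDr mulrCA.
by apply: ltr_wpDr; [rewrite mulr_ge0 ?Cv | exact: chamber_x0].
Qed.

Lemma rec_coneD u v : rec_cone u -> rec_cone v -> rec_cone (u + v).
Proof. by move=> Cu Cv h hA; rewrite lin_evalD mulrDr addr_ge0 ?Cu ?Cv. Qed.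

Lemma rec_coneD_eq0 u v h : rec_cone u -> rec_cone v -> h \in A ->
  lin_eval h (u + v) = 0 -> lin_eval h u = 0.
Proof.
move=> Cu Cv hA; rewrite lin_evalD => /eqP; rewrite addrC addr_eq0 => /eqP vu.
have := Cv h hA; rewrite vu mulrN oppr_ge0 => le0.
have : side h * lin_eval h u = 0 by apply/eqP; rewrite eq_le le0 Cu.
by move/eqP; rewrite mulf_eq0 (negbTE (side_neq0 hA)) => /eqP.
Qed.

Lemma lsignvec_rec_cone u v : rec_cone v -> lsignvec A u = lsignvec A v -> rec_cone u.
Proof.
move=> Cv /eq_in_map uv h hA.
by rewrite -sgr_ge0 sgrM (uv h hA) -sgrM sgr_ge0 Cv.
Qed.

Lemma signvec_closed_chamber p y :
  closed_chamber p -> signvec A y = signvec A p -> closed_chamber y.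
Proof.
move=> Kp /eq_in_map yp h hA.
by rewrite -sgr_ge0 sgrM (yp h hA) -sgrM sgr_ge0 Kp.
Qed.


Lemma inf_closure_chamber v : inf_closure chamber v -> rec_cone v \/ rec_cone (- v).
Proof.
case=> _ [x [c [Cx c0 cv]]].
have lim h : (fun k => c k * (side h * aff_eval h (x k))) @ \oo --> side h * lin_eval h v.
  have -> : (fun k => c k * (side h * aff_eval h (x k))) =
      (fun k => side h * (c k * aff_eval h (x k))).
    by apply: funext => k; rewrite mulrCA.
  by apply: cvgMl_tmp; exact: inf_closure_aff_cvg.
case: (pselect (rec_cone v)) => [|/existsNP [h1 /not_implyP [h1A]]]; first by left.
move/negP; rewrite -ltNge => neg1; right => h2 h2A.
rewrite lin_evalN mulrN oppr_ge0 leNgt; apply/negP => pos2.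
have [k [/= lt1 gt2]] :=
  filter_ex (filterI (cvgr_lt _ (lim h1) _ neg1) (cvgr_gt _ (lim h2) _ pos2)).
have := Cx k h1 h1A; have := Cx k h2 h2A; nra.
Qed.

Lemma rec_cone_inf_closure v : rec_cone v -> v != 0 ->
  inf_closure chamber v /\ inf_closure chamber (- v).
Proof.
move=> Cv v0; have ray k : chamber (x0 + k%:R *: v) by exact: ray_in_chamber.
by split; [rewrite -[v]scale1r | rewrite -scaleN1r]; apply: inf_closure_ray.
Qed.


Lemma growing_rec_cone_gt0 f0 v : growing f0 chamber -> rec_cone v -> v != 0 ->
  0 < lin_eval f0 v.
Proof.
move=> [_ grow] Cv v0; rewrite ltNge; apply/negP => f0v.
have [r Hr] := grow (aff_eval f0 x0 + 1).
have nv : 0 < `|v| by rewrite normr_gt0.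
pose k := (`|r| + `|x0|) / `|v|.
have k0 : 0 <= k by rewrite divr_ge0 ?addr_ge0.
have far : r <= `|x0 + k *: v|.
  have := lerB_normD (k *: v) x0.
  rewrite (addrC (k *: v)) normrZ ger0_norm // divfK ?gt_eqF //.
  by have := ler_norm r; lra.
have := Hr _ (ray_in_chamber Cv k0) far; rewrite aff_evalD lin_evalZ.
by have := mulr_ge0_le0 k0 f0v; lra.
Qed.

Lemma bounded_rec_cone f v : f_bounded_on f chamber -> rec_cone v -> lin_eval f v = 0.
Proof.
move=> [M HM] Cv; apply/eqP; apply: contraT => fv.
have nfv : 0 < `|lin_eval f v| by rewrite normr_gt0.
pose k := (M + `|aff_eval f x0| + 1) / `|lin_eval f v|.
have M0 := le_trans (normr_ge0 _) (HM _ chamber_x0).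
have k0 : 0 <= k by rewrite divr_ge0 // -addrA addr_ge0.
have := HM _ (ray_in_chamber Cv k0); rewrite aff_evalD lin_evalZ.
have := lerB_normD (k * lin_eval f v) (aff_eval f x0).
by rewrite (addrC (k * _)) normrM ger0_norm // divfK ?gt_eqF //; lra.
Qed.

Lemma hyperplane_neq0 f : hyperplane_of A f -> forall x, chamber x -> aff_eval f x != 0.
Proof.
case=> _ [h [hA fh]] x Cx; apply/eqP => fx.
by have /eqP := chamber_compl Cx hA; apply; change (zeroset h x); rewrite -fh.
Qed.

Lemma hyperplane_abs f : hyperplane_of A f ->
  forall y, closure chamber y -> `|aff_eval f y| = Num.sg (aff_eval f x0) * aff_eval f y.
Proof.
move=> Hf y Dy.
have pos : 0 <= Num.sg (aff_eval f x0) * aff_eval f y.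
  apply: (closure_ge0 (phi := fun x => Num.sg (aff_eval f x0) * aff_eval f x)) Dy.
    by move=> x; exact/(@cvgMl_tmp _ _ (nbhs x) (nbhs_filter x))/aff_eval_continuous.
  apply: connected_sgr_mul_gt0; last exact: chamber_x0.
  - exact: chamber_connected.
  - exact/continuous_subspaceT/aff_eval_continuous.
  - exact: hyperplane_neq0.
have sg1 : `|Num.sg (aff_eval f x0)| = 1.
  by rewrite normr_sg (hyperplane_neq0 Hf chamber_x0).
by rewrite -[LHS]mul1r -sg1 -normrM ger0_norm.
Qed.

End Chamber.

Lemma count_lt_in (T : eqType) (a b : pred T) (s : seq T) :
  {in s, subpred a b} -> has (predD b a) s -> (count a s < count b s)%N.
Proof.
move=> ab; rewrite has_count => hD.
have eU : count (predU a (predD b a)) s = count b s.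
  by apply: eq_in_count => x xs /=; case ax: (a x); rewrite //= (ab x xs ax).
have eI : count (predI a (predD b a)) s = 0%N.
  by rewrite (eq_count (a2 := pred0)) ?count_pred0 // => x /=; case: (a x).
by have := count_predUI a (predD b a) s; rewrite eU eI; lia.
Qed.

Lemma argmin_seq (R : realType) (T : eqType) (s : seq T) (r : T -> R) :
  s != [::] -> exists2 x, x \in s & forall y, y \in s -> r x <= r y.
Proof.
elim: s => // a s IH _; have [->|/IH [b bs bmin]] := eqVneq s [::].
  by exists a; rewrite ?mem_seq1 // => y; rewrite mem_seq1 => /eqP ->.
have [ab|ba] := leP (r a) (r b).
- exists a; first exact: mem_head.
  by move=> y; rewrite in_cons => /predU1P [->//|ys]; exact: le_trans ab (bmin y ys).
- exists b; first by rewrite in_cons bs orbT.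
  by move=> y; rewrite in_cons => /predU1P [->|ys]; [exact: ltW | exact: bmin].
Qed.

Section MaxOnClosedChamber.
Variables (R : realType) (n : nat) (A : seq (aff R n)) (x0 : 'rV[R]_n) (f : aff R n).
Local Notation V := 'rV[R]_n.
Local Notation K := (closed_chamber A x0).
Local Notation side := (side x0).
Hypothesis Ax0 : arr_compl A x0.
Hypothesis f_rec_cone : forall d, rec_cone A x0 d -> lin_eval f d = 0.

(* [f] is constant on the face of the closed chamber through [p]. *)
Definition flat (p : V) : Prop := forall d,
  (forall h, h \in A -> aff_eval h p = 0 -> lin_eval h d = 0) -> lin_eval f d = 0.

Definition nactive (y : V) : nat := count (fun h => aff_eval h y == 0) A.

Lemma ratio_test y e : K y -> has (fun h => side h * lin_eval h e < 0) A ->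
  exists s, [/\ 0 <= s, K (y + s *: e) &
    exists2 h, h \in A & lin_eval h e != 0 /\ aff_eval h (y + s *: e) = 0].
Proof.
move=> Ky hasneg.
pose T := [seq h <- A | side h * lin_eval h e < 0].
pose r h := side h * aff_eval h y / - (side h * lin_eval h e).
have [|h hT hmin] := argmin_seq r (s := T).
  by apply: contraTneq hasneg => T0; rewrite has_filter -/T T0.
move: hT; rewrite mem_filter => /andP[hneg hA].
have rh0 : 0 <= r h by rewrite divr_ge0 ?Ky // oppr_ge0 ltW.
have he : lin_eval h e != 0 by apply: contraTneq hneg => ->; rewrite mulr0 ltxx.
exists (r h); split => //; last first.
  exists h => //; split => //; rewrite aff_evalD lin_evalZ /r.
  by field; rewrite he (side_neq0 Ax0 hA).
move=> h' h'A; rewrite aff_evalD lin_evalZ mulrDr mulrCA.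
have [h'neg|h'pos] := ltP (side h' * lin_eval h' e) 0; last first.
  by apply: addr_ge0; [exact: Ky | exact: mulr_ge0].
have := hmin h'; rewrite mem_filter h'neg h'A /r => /(_ isT).
by rewrite ler_pdivlMr ?oppr_gt0 // mulrN -subr_ge0 opprK.
Qed.

(* Move along a direction tangent to the active constraints along which [f]
   increases, until a new constraint becomes active. *)
Lemma walk_step y : K y -> ~ flat y ->
  exists y', [/\ K y', aff_eval f y <= aff_eval f y' & (nactive y < nactive y')%N].
Proof.
move=> Ky /existsNP [d /not_implyP [dtan /eqP fd]].
pose e := Num.sg (lin_eval f d) *: d.
have etan h : h \in A -> aff_eval h y = 0 -> lin_eval h e = 0.
  by move=> hA hy; rewrite lin_evalZ (dtan h hA hy) mulr0.
have fe : 0 < lin_eval f e by rewrite lin_evalZ -normrEsg normr_gt0.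
have hasneg : has (fun h => side h * lin_eval h e < 0) A.
  apply: contraTT fe; rewrite -all_predC => /allP Ce.
  rewrite f_rec_cone ?ltxx // => h hA; rewrite leNgt; exact: Ce.
have [s [s0 Kys [h hA [he hys]]]] := ratio_test Ky hasneg.
exists (y + s *: e); split => //.
  by rewrite aff_evalD lin_evalZ lerDl mulr_ge0 // ltW.
apply: count_lt_in => [h' h'A /eqP h'y|].
  by rewrite /= aff_evalD lin_evalZ etan ?h'y ?mulr0 ?addr0.
apply/hasP; exists h => //=; rewrite hys eqxx andbT.
by apply: contra he => /eqP /(etan h hA) ->.
Qed.

Lemma walk_to_flat y : K y -> exists2 p, K p /\ flat p & aff_eval f y <= aff_eval f p.
Proof.
move: {2}(size A - nactive y)%N (leqnn (size A - nactive y)) => N.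
elim: N y => [|N IH] y bound Ky; have [fy|nfy] := pselect (flat y);
  try by exists y.
all: have [y' [Ky' le lt]] := walk_step Ky nfy.
  by have := count_size (fun h => aff_eval h y' == 0) A; rewrite -/(nactive y'); lia.
have [|p Kp le'] := IH y' _ Ky'; first by lia.
by exists p => //; exact: le_trans le le'.
Qed.

Definition zero_pattern (y : V) : (size A).-tuple bool :=
  map_tuple (fun h => aff_eval h y == 0) (in_tuple A).

Lemma flat_zero_pattern p q :
  flat p -> zero_pattern p = zero_pattern q -> aff_eval f p = aff_eval f q.
Proof.
move=> fp /(congr1 val) /= /eq_in_map pq; apply/eqP; rewrite eq_sym -subr_eq0.
rewrite aff_eval_sub fp // => h hA hp; rewrite -aff_eval_sub hp subr0.
by apply/eqP; rewrite -(pq h hA) hp.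
Qed.

(* Flat points have finitely many zero patterns, hence [f] takes finitely
   many values on them. *)
Lemma flat_argmax : exists p, [/\ K p, flat p &
  forall q, K q -> flat q -> aff_eval f q <= aff_eval f p].
Proof.
have [p0 [Kp0 fp0] _] := walk_to_flat (chamber_closed_chamber (chamber_x0 Ax0)).
pose realized b := `[< exists p, [/\ K p, flat p & zero_pattern p = b] >].
pose rep b := xget x0 [set p | [/\ K p, flat p & zero_pattern p = b]].
have repP b : realized b -> [/\ K (rep b), flat (rep b) & zero_pattern (rep b) = b].
  by move=> /asboolP; exact: xgetPex.
have p0r : realized (zero_pattern p0) by apply/asboolP; exists p0.
case: (arg_maxP (fun b => aff_eval f (rep b)) p0r) => b rb bmax.
have [Kb fb _] := repP b rb.
exists (rep b); split => // q Kq fq.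
have qr : realized (zero_pattern q) by apply/asboolP; exists q.
have [_ _ zq] := repP _ qr.
by rewrite (flat_zero_pattern fq (esym zq)); exact: bmax.
Qed.

Lemma closed_chamber_max : exists p, [/\ K p,
  forall y, K y -> aff_eval f y <= aff_eval f p &
  forall y, signvec A y = signvec A p -> aff_eval f y = aff_eval f p].
Proof.
have [p [Kp fp pmax]] := flat_argmax.
exists p; split => // [y Ky|y /eq_in_map yp].
  by have [q [Kq fq] le] := walk_to_flat Ky; exact: le_trans le (pmax q Kq fq).
apply/esym/flat_zero_pattern => //; apply: val_inj => /=; apply/eq_in_map => h hA.
by rewrite /= -sgr_eq0 -(yp h hA) sgr_eq0.
Qed.

End MaxOnClosedChamber.

Lemma hyperplane_abs_max (R : realType) (n : nat) (A : seq (aff R n)) (x0 : 'rV[R]_n)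
    (f : aff R n) :
  arr_compl A x0 -> hyperplane_of A f ->
  (forall d, rec_cone A x0 d -> lin_eval f d = 0) ->
  exists p, [/\ closure (chamber A x0) p,
    forall y, closure (chamber A x0) y -> `|aff_eval f y| <= `|aff_eval f p| &
    forall y, signvec A y = signvec A p ->
      closure (chamber A x0) y /\ aff_eval f y = aff_eval f p].
Proof.
move=> Ax0 Hf frec; pose s := Num.sg (aff_eval f x0).
have s0 : s != 0 by rewrite sgr_eq0 (hyperplane_neq0 Hf (chamber_x0 Ax0)).
have [|p [Kp pmax pface]] := closed_chamber_max (f := aff_scale s f) Ax0.
  by move=> d Cd; rewrite lin_eval_scale frec ?mulr0.
have clE := closure_chamber Ax0.
exists p; split => [|y|y yp]; first by rewrite clE.
  rewrite clE => Ky; rewrite !(hyperplane_abs Ax0 Hf) ?clE //.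
  by have := pmax y Ky; rewrite !aff_eval_scale.
split; first by rewrite clE; exact: signvec_closed_chamber yp.
by apply: (mulfI s0); have := pface y yp; rewrite !aff_eval_scale.
Qed.

Section Dimension.
Variables (R : realType) (n : nat).
Local Notation V := 'rV[R]_n.

Lemma free_size_le (s : seq V) : free s -> (size s <= n)%N.
Proof.
by move=> /eqP <-; have := dimvS (subvf (span s)); rewrite dimvf dim_matrix; lia.
Qed.

Lemma free_size_le_ldim (S : set V) (s : seq V) :
  free s -> (forall v, v \in s -> S v) -> (size s <= ldim S)%N.
Proof.
move=> fs sS; have lt : (size s < n.+1)%N by rewrite ltnS free_size_le.
apply: (@leq_bigmax_cond _ _ (fun k : 'I_n.+1 => nat_of_ord k) (Ordinal lt)).
by apply/asboolP; exists s.
Qed.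

Lemma ldim_witness (S : set V) :
  exists s : seq V, [/\ size s = ldim S, free s & forall v, v \in s -> S v].
Proof.
pose P (k : 'I_n.+1) :=
  `[< exists s : seq V, [/\ size s = k, (forall v, v \in s -> S v) & free s] >].
have P0 : P ord0 by apply/asboolP; exists [::]; split => //; exact: nil_free.
have cP : (0 < #|P|)%N by apply/card_gt0P; exists ord0.
have [k Pk kmax] := eq_bigmax_cond (fun k : 'I_n.+1 => nat_of_ord k) cP.
have -> : ldim S = k by rewrite /ldim -kmax.
by case/asboolP: Pk => s [? ? ?]; exists s.
Qed.

Lemma lin_eval_span_eq0 (f : aff R n) (s : seq V) :
  (forall u, u \in s -> lin_eval f u = 0) -> forall v, v \in span s -> lin_eval f v = 0.
Proof.
move=> fs v /(@coord_span _ _ _ (in_tuple s)) ->.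
rewrite (big_morph _ (lin_evalD f) (lin_eval0 f)) big1 // => i _.
by rewrite lin_evalZ fs ?mulr0 // mem_nth.
Qed.

Lemma free_cons_shift (w : V) (K : R) (s : seq V) :
  free (w :: s) -> free (w :: map (fun u => K *: w + u) s).
Proof.
rewrite /free /= size_map.
suff -> : span (w :: map (fun u => K *: w + u) s) = span (w :: s) by [].
apply/eqP; rewrite eqEsubv; apply/andP; split; apply/span_subvP => x.
- rewrite in_cons => /predU1P [->|/mapP [u us ->]]; first by rewrite memv_span ?mem_head.
  by apply: rpredD; [apply: rpredZ|]; apply: memv_span; rewrite in_cons ?eqxx ?us ?orbT.
- rewrite in_cons => /predU1P [->|xs]; first by rewrite memv_span ?mem_head.
  rewrite -(addKr (K *: w) x); apply: rpredD.
    by rewrite rpredN memvZ // memv_span // mem_head.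
  by apply: memv_span; rewrite in_cons; apply/orP; right; apply/mapP; exists x.
Qed.

End Dimension.

Lemma sgrD_norm_lt (R : realDomainType) (b c : R) :
  `|b| < `|c| -> Num.sg (c + b) = Num.sg c.
Proof.
move=> /ltr_normlP [nb pb]; case: (ltrgtP c 0) => c0.
- have cb : c + b < 0 by rewrite ltr0_norm // in nb pb; lra.
  by rewrite (ltr0_sg c0) (ltr0_sg cb).
- have cb : 0 < c + b by rewrite gtr0_norm // in nb pb; lra.
  by rewrite (gtr0_sg c0) (gtr0_sg cb).
- by move: pb nb; rewrite c0 normr0; lra.
Qed.

Lemma lsignvec_shift (R : realType) (n : nat) (A : seq (aff R n)) (w : 'rV[R]_n)
    (s : seq 'rV[R]_n) :
  (forall u h, u \in s -> h \in A -> lin_eval h w = 0 -> lin_eval h u = 0) ->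
  exists2 K : R, 0 < K & forall u, u \in s -> lsignvec A (K *: w + u) = lsignvec A w.
Proof.
move=> zw.
pose M := \big[Num.max/0]_(h <- A) \big[Num.max/0]_(u <- s)
  (`|lin_eval h u| / `|lin_eval h w|).
have K0 : 0 < 1 + M by rewrite ltr_pwDl ?bigmax_ge_id.
exists (1 + M) => // u us; apply/eq_in_map => h hA /=; rewrite lin_evalD lin_evalZ.
have [hw|hw] := eqVneq (lin_eval h w) 0; first by rewrite hw (zw u h) // mulr0 addr0.
have hM : `|lin_eval h u| / `|lin_eval h w| <= M.
  apply: le_trans (le_bigmax_seq _ _ _ _ hA isT).
  exact: (le_bigmax_seq _ _ _ (fun u => `|lin_eval h u| / `|lin_eval h w|) us isT).
rewrite ler_pdivrMr ?normr_gt0 // in hM.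
rewrite sgrD_norm_lt; first by rewrite sgrM gtr0_sg ?mul1r.
rewrite normrM gtr0_norm // mulrDl mul1r.
by apply: ltr_pwDl hM; rewrite normr_gt0.
Qed.

Section TraceAtInfinity.
Variables (R : realType) (n : nat) (A : seq (aff R n)) (x0 : 'rV[R]_n).
Local Notation V := 'rV[R]_n.
Local Notation Delta := (chamber A x0).
Hypothesis Ax0 : arr_compl A x0.

Definition face_inf_of (v : V) : set V :=
  [set w | w != 0 /\ (lsignvec A w = lsignvec A v \/ lsignvec A w = lsignvec A (- v))].

Lemma face_inf_ofN v : face_inf_of (- v) = face_inf_of v.
Proof.
by apply/seteqP; split => w [w0 e]; split => //; rewrite opprK in e *; apply/or_comm.
Qed.

Lemma face_inf_of_zero v u h :
  face_inf_of v u -> h \in A -> lin_eval h v = 0 -> lin_eval h u = 0.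
Proof.
by move=> [_ [e|e]] hA hv; move/eq_in_map: e => /(_ h hA) /=;
  rewrite ?lin_evalN hv ?oppr0 sgr0 => /eqP; rewrite sgr_eq0 => /eqP.
Qed.

Lemma face_inf_of_rec_cone w : rec_cone A x0 w -> w != 0 ->
  face_inf_of w `<=` inf_closure Delta.
Proof.
move=> Cw w0 u [u0 [e|/eq_in_map e]].
  exact: (rec_cone_inf_closure Ax0 (lsignvec_rec_cone Cw e) u0).1.
rewrite -[u]opprK; apply: (rec_cone_inf_closure Ax0 _ _).2; last by rewrite oppr_eq0.
apply: (lsignvec_rec_cone Cw); apply/eq_in_map => h hA /=.
by rewrite lin_evalN sgrN (e h hA) /= lin_evalN sgrN opprK.
Qed.

Lemma tr_face_rec_cone F : is_tr A Delta F ->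
  exists v, [/\ v != 0, rec_cone A x0 v & F = face_inf_of v].
Proof.
case=> [[v0 v0n0 ->] FI _].
have Fv0 : face_inf_of v0 v0 by split => //; left.
case: (inf_closure_chamber (FI _ Fv0)) => Cv; [exists v0 | exists (- v0)].
  by [].
by rewrite face_inf_ofN oppr_eq0.
Qed.

(* Let F = face_inf_of v with v in the cone. A direction d of the cone with
   f^0 d <> 0 would give the face at infinity of w = v + d, which lies in the
   closure of Delta and contains w and the K w + u for a basis u of F, hence
   has larger dimension than F. *)
Lemma tr_rec_cone_orth F f : is_tr A Delta F -> (forall w, F w -> lin_eval f w = 0) ->
  forall d, rec_cone A x0 d -> lin_eval f d = 0.
Proof.
move=> trF fF d Cd; apply/eqP; apply: contraT => fd.
have [v [v0 Cv FE]] := tr_face_rec_cone trF.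
have [_ _ Fmax] := trF.
have Fv : F v by rewrite FE; split => //; left.
pose w := v + d.
have Cw : rec_cone A x0 w := rec_coneD Cv Cd.
have fw : lin_eval f w = lin_eval f d by rewrite lin_evalD fF ?add0r.
have w0 : w != 0 by apply: contraNneq fd => w0; rewrite -fw w0 lin_eval0.
have [s [ss fs sF]] := ldim_witness F.
have [K K0 Ks] : exists2 K : R, 0 < K &
    forall u, u \in s -> lsignvec A (K *: w + u) = lsignvec A w.
  apply: lsignvec_shift => u h us hA hw; have := sF u us; rewrite FE => Fu.
  exact: face_inf_of_zero Fu hA (rec_coneD_eq0 Ax0 Cv Cd hA hw).
pose s' := w :: map (fun u => K *: w + u) s.
have s'F' x : x \in s' -> face_inf_of w x.
  rewrite in_cons => /predU1P [->|/mapP [u us ->]]; first by split => //; left.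
  split; last by left; exact: Ks.
  apply: contraNneq fd => e0; have : lin_eval f (K *: w + u) = K * lin_eval f d.
    by rewrite lin_evalD lin_evalZ fw (fF u (sF u us)) addr0.
  by rewrite e0 lin_eval0 => /esym/eqP; rewrite mulf_eq0 (gt_eqF K0).
have fs' : free s'.
  apply: free_cons_shift; rewrite free_cons fs andbT.
  apply/negP => ws; move/negP: fd; apply.
  by rewrite -fw (lin_eval_span_eq0 (s := s)) // => u us; exact: fF (sF u us).
have F1 : (1 <= ldim F)%N.
  apply: (free_size_le_ldim (s := [:: v])) => [|u]; first by rewrite seq1_free.
  by rewrite mem_seq1 => /eqP ->.
have := Fmax (face_inf_of w) (ex_intro2 _ _ w w0 erefl) (face_inf_of_rec_cone Cw w0).
have := free_size_le_ldim fs' s'F'.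
rewrite /pdim /s' /= size_map ss; lia.
Qed.

End TraceAtInfinity.

Section Branch.
Variables (R : realType) (n : nat).
Local Notation V := 'rV[R]_n.

Lemma sin_between (a b : R) : sin a = 0 -> a < b -> exists2 c, a < c < b & sin c != 0.
Proof.
move=> sa ab; pose u := Num.min ((b - a) / 2) (pi / 2).
have pi0 := pi_gt0 R.
have u0 : 0 < u by rewrite lt_min !divr_gt0 // subr_gt0.
have [u1 u2] : u <= (b - a) / 2 /\ u <= pi / 2 by split; rewrite ge_min lexx ?orbT.
exists (a + u); first by apply/andP; split; lra.
rewrite sinD sa mul0r add0r mulf_neq0 //.
  have := cos2Dsin2 a; rewrite sa expr0n /= addr0 => /eqP; rewrite sqrf_eq1.
  by case/orP => /eqP ->; rewrite ?oppr_eq0 oner_eq0.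
by apply: lt0r_neq0; apply: sin_gt0_pi; apply/andP; split; lra.
Qed.

Lemma connected_sin_eq0_const (T : topologicalType) (D : set T) (phi : T -> R) a :
  connected D -> {within D, continuous phi} -> D a ->
  (forall x, D x -> sin (phi x) = 0) -> forall x, D x -> phi x = phi a.
Proof.
move=> cD cphi Da s0 x Dx; apply: contrapT => neq.
have /connected_intervalP img := connected_continuous_connected cD cphi.
have sin_gap u v : D u -> D v -> phi u < phi v -> False.
  move=> Du Dv uv; have [c /andP[uc cv] sc] := sin_between (s0 u Du) uv.
  have [w Dw wc] := img _ _ (ex_intro2 _ _ u Du erefl) (ex_intro2 _ _ v Dv erefl) c
    (ltac:(by rewrite !ltW)).
  by move: sc; rewrite -wc s0 ?eqxx.
case: (ltgtP (phi a) (phi x)) => [ax|xa|ax]; first exact: sin_gap Da Dx ax.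
  exact: sin_gap Dx Da xa.
exact: neq (esym ax).
Qed.

Local Open Scope complex_scope.

(* As f is real, exp (L x) is real: sin (Im (L x)) = 0, so Im L is constant on
   the connected D and Re L = ln |f|. *)
Lemma branch_log_abs (f : aff R n) alpha (D : set V) g a :
  connected D -> D a -> (forall x, D x -> aff_eval f x != 0) -> branch f alpha D g ->
  exists th : R, forall x, D x -> g x = cexp (alpha * ((ln `|aff_eval f x|) +i* th)).
Proof.
move=> cD Da nz [L [cRe cIm HL Hg]].
have sinL x : D x -> sin (complex.Im (L x)) = 0.
  move=> Dx; have /(congr1 (@complex.Im R)) /= /eqP := HL x Dx.
  by rewrite mulf_eq0 gt_eqF ?expR_gt0 //= => /eqP.
exists (complex.Im (L a)) => x Dx.
have cos1 : `|cos (complex.Im (L x))| = 1.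
  have := cos2Dsin2 (complex.Im (L x)); rewrite sinL // expr0n /= addr0 => /eqP.
  by rewrite sqrf_eq1 => /orP [] /eqP ->; rewrite ?normrN normr1.
have ReL : complex.Re (L x) = ln `|aff_eval f x|.
  have /(congr1 (@complex.Re R)) /= <- := HL x Dx.
  by rewrite normrM cos1 mulr1 gtr0_norm ?expR_gt0 // expRK.
rewrite Hg // -ReL -(connected_sin_eq0_const cD cIm Da sinL Dx).
by case: (L x).
Qed.

Lemma cexp_line_continuous (pr : R[i] -> R) (alpha : R[i]) (th : R) :
  (pr = @complex.Re R \/ pr = @complex.Im R) ->
  continuous (fun l : R => pr (cexp (alpha * (l +i* th)))).
Proof.
case: alpha => ar ai prE.
have lin (a b : R) : continuous (fun l : R => a * l + b).
  by move=> l; apply: cvgD; [apply: cvgMl_tmp; exact: cvg_id | exact: cvg_cst].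
have expR_trig (trig : R -> R) : continuous trig ->
    continuous (fun l => expR (ar * l - ai * th) * trig (ai * l + ar * th)).
  move=> ct l; apply: (continuousM (s := fun l => expR (ar * l - ai * th))
    (t := fun l => trig (ai * l + ar * th))).
    apply: (@continuous_comp R R R (fun l => ar * l - ai * th) expR l).
      exact: lin.
    exact: continuous_expR.
  apply: (@continuous_comp R R R (fun l => ai * l + ar * th) trig l).
    exact: lin.
  exact: ct.
case: prE => ->; [have := expR_trig _ (@continuous_cos R) |
                  have := expR_trig _ (@continuous_sin R)];
  by under eq_fun do rewrite [ai * _ + _]addrC.
Qed.

Lemma branch_cvg (pr : R[i] -> R) (f : aff R n) alpha th (D : set V) g q :
  (pr = @complex.Re R \/ pr = @complex.Im R) ->
  (forall x, D x -> g x = cexp (alpha * ((ln `|aff_eval f x|) +i* th))) ->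
  aff_eval f q != 0 ->
  (fun x => pr (g x)) @ within D (nbhs q) -->
    pr (cexp (alpha * ((ln `|aff_eval f q|) +i* th))).
Proof.
move=> prE gE fq.
have ff : (fun x => aff_eval f x) @ nbhs q --> aff_eval f q :=
  @aff_eval_continuous _ _ f q.
have absf : (fun x => `|aff_eval f x|) @ nbhs q --> `|aff_eval f q|.
  exact: (cvg_comp _ _ ff (@norm_continuous _ R^o _)).
have lnf : (fun x => ln `|aff_eval f x|) @ nbhs q --> ln `|aff_eval f q|.
  by apply: (cvg_comp _ _ absf); apply: continuous_ln; rewrite normr_gt0.
have cG := cexp_line_continuous (alpha := alpha) (th := th) prE.
have G_cvg := cvg_comp _ _ lnf (cG (ln `|aff_eval f q|)).
have gG : \forall x \near within D (nbhs q),
    pr (cexp (alpha * ((ln `|aff_eval f x|) +i* th))) = pr (g x).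
  by apply: (@filterE _ _ (nbhs_filter q)) => x Dx; rewrite gE.
exact: cvg_trans (near_eq_cvg gG) (@cvg_within_filter _ _ _ _ (nbhs_filter q) _ D G_cvg).
Qed.

Local Close Scope complex_scope.

End Branch.

Section ExternalSupport.
Variables (R : realType) (n : nat).
Local Notation V := 'rV[R]_n.

Lemma ext_supp_exists (A : seq (aff R n)) (f : aff R n) (D F0 : set V) :
  face A F0 -> F0 `<=` Defs.maxset f D -> exists F, ext_supp A f D F.
Proof.
move=> fF0 F0max.
pose P k := `[< exists F, [/\ face A F, F `<=` Defs.maxset f D & adim F = k] >].
have ex : exists k, P k by exists (adim F0); apply/asboolP; exists F0.
have ub k : P k -> (k <= n)%N.
  move=> /asboolP [F [_ _ <-]]; apply/bigmax_leqP => i _.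
  by rewrite -ltnS; exact: ltn_ord.
have [m /asboolP [F [fF Fmax <-]] mmax] := ex_maxnP ex ub.
by exists F; split => // F' fF' F'max; apply: mmax; apply/asboolP; exists F'.
Qed.

Lemma ext_valueP (A : seq (aff R n)) (f : aff R n) (g : V -> R[i]) (D F0 : set V) c :
  face A F0 -> F0 `<=` Defs.maxset f D ->
  (forall q, Defs.maxset f D q ->
     (fun x => complex.Re (g x)) @ within D (nbhs q) --> complex.Re c /\
     (fun x => complex.Im (g x)) @ within D (nbhs q) --> complex.Im c) ->
  ext_value A f g D c.
Proof.
move=> fF0 F0max lim; split; first exact: ext_supp_exists fF0 F0max.
by move=> F [_ Fmax _] q Fq; exact/lim/Fmax.
Qed.

End ExternalSupport.

Section BoundedBranch.
Variables (R : realType) (n : nat) (A : seq (aff R n)) (x0 : 'rV[R]_n).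
Variables (f : aff R n) (alpha : R[i]) (g : 'rV[R]_n -> R[i]) (th : R) (p : 'rV[R]_n).
Local Notation V := 'rV[R]_n.
Local Notation Delta := (chamber A x0).
Local Notation c := (cexp (alpha * ((ln `|aff_eval f p|) +i* th)%C)).
Hypothesis Ax0 : arr_compl A x0.
Hypothesis Hf : hyperplane_of A f.
Hypothesis p_closure : closure Delta p.
Hypothesis p_max : forall y, closure Delta y -> `|aff_eval f y| <= `|aff_eval f p|.
Hypothesis p_face : forall y, signvec A y = signvec A p ->
  closure Delta y /\ aff_eval f y = aff_eval f p.
Hypothesis gE : forall x, Delta x -> g x = cexp (alpha * ((ln `|aff_eval f x|) +i* th)%C).

(* g only depends on |f|, so at every point of maximal |f| it tends to the
   value of the branch at p. *)
Lemma ext_value_subdomain (A' : seq (aff R n)) (D F0 : set V) :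
  D `<=` Delta -> closure D p -> face A' F0 -> F0 `<=` Defs.maxset f D ->
  ext_value A' f g D c.
Proof.
move=> DD pD fF0 F0max; apply: (ext_valueP fF0 F0max) => q [qD qmax].
have fq : `|aff_eval f q| = `|aff_eval f p|.
  by apply/le_anti; rewrite (qmax p pD) (p_max (closure_subset DD qD)).
have fq0 : aff_eval f q != 0.
  rewrite -normr_eq0 fq normr_eq0.
  apply: contraTneq (p_max (subset_closure (chamber_x0 Ax0))).
  by move=> ->; rewrite normr0 -ltNge normr_gt0 (hyperplane_neq0 Hf (chamber_x0 Ax0)).
have gD x : D x -> g x = cexp (alpha * ((ln `|aff_eval f x|) +i* th)%C).
  by move=> Dx; exact: gE (DD x Dx).
by rewrite -fq; split; apply: branch_cvg gD fq0; [left | right].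
Qed.

Lemma ext_value_chamber : ext_value A f g Delta c.
Proof.
apply: (ext_value_subdomain (F0 := [set y | signvec A y = signvec A p])) => //.
  by exists p.
by move=> y /p_face [yD fy]; split => // z zD; rewrite fy; exact: p_max.
Qed.

Lemma ext_value_truncated (f0 : aff R n) t : aff_eval f0 p < t ->
  ext_value (arr_t A f0 t) f g (Delta `&` [set x | aff_eval f0 x < t]) c.
Proof.
move=> f0p.
have closure_trunc y : closure Delta y -> aff_eval f0 y < t ->
    closure (Delta `&` [set x | aff_eval f0 x < t]) y.
  rewrite closure_chamber // => Ky f0y; apply: closed_chamber_closureI => //.
  exact: (cvgr_lt _ (@aff_eval_continuous _ _ f0 y) t f0y).
pose At := arr_t A f0 t.
apply: (ext_value_subdomain (F0 := [set y | signvec At y = signvec At p])).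
- exact: subIsetl.
- exact: closure_trunc.
- by exists p.
have ev z : aff_eval (f0.1, f0.2 - t) z = aff_eval f0 z - t by rewrite /aff_eval addrA.
move=> y /eqP; rewrite /signvec /At /arr_t !map_rcons eqseq_rcons.
move=> /andP [/eqP /p_face [yD fy]].
rewrite !ev (@ltr0_sg _ (aff_eval f0 p - t)) ?subr_lt0 //.
move=> sgy; have f0y : aff_eval f0 y < t by rewrite -subr_lt0 -sgr_lt0 (eqP sgy) ltrN10.
split; first exact: closure_trunc.
by move=> z zDt; rewrite fy; apply: p_max; apply: closure_subset zDt; exact: subIsetl.
Qed.

End BoundedBranch.

Section Characterizations.
Variables (R : realType) (n : nat) (A : seq (aff R n)) (x0 : 'rV[R]_n) (f : aff R n).
Local Notation Delta := (chamber A x0).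
Local Notation rec_cone_orth f := (forall d, rec_cone A x0 d -> lin_eval f d = 0).
Hypothesis Ax0 : arr_compl A x0.

Lemma bounded_iff_rec_cone_orth : hyperplane_of A f ->
  f_bounded_on f Delta <-> rec_cone_orth f.
Proof.
move=> Hf; split => [bnd d|frec]; first exact: bounded_rec_cone.
have [p [_ pmax _]] := hyperplane_abs_max Ax0 Hf frec.
by exists `|aff_eval f p| => x Dx; apply/pmax/subset_closure.
Qed.

Lemma tr_pm_rec_cone F v : is_tr A Delta F -> F v ->
  v != 0 /\ (rec_cone A x0 v \/ rec_cone A x0 (- v)).
Proof.
by case=> _ FI _ /FI Dv; split; [case: Dv | exact: inf_closure_chamber].
Qed.

Lemma tr_sub_trH_iff F : nonconstant f -> is_tr A Delta F ->
  F `<=` trH f <-> rec_cone_orth f.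
Proof.
move=> nf trF; split => [FH|frec v Fv].
  by apply: (tr_rec_cone_orth Ax0 trF) => w /FH /(trHP _ nf) [].
apply/(trHP _ nf); have [vn0 [Cv|Cv]] := tr_pm_rec_cone trF Fv; split => //.
  exact: frec.
by apply/eqP; rewrite -oppr_eq0 -lin_evalN frec.
Qed.

Lemma tr_sub_trH_iff_h_vanishes f0 F : nonconstant f -> nonconstant f0 ->
  growing f0 Delta -> is_tr A Delta F -> F `<=` trH f <-> h_vanishes_on f f0 F.
Proof.
move=> nf nf0 grow trF.
have f0F v : F v -> lin_eval f0 v != 0.
  move=> Fv; have [vn0 [Cv|Cv]] := tr_pm_rec_cone trF Fv.
    by rewrite gt_eqF // (growing_rec_cone_gt0 Ax0 grow Cv).
  by rewrite -oppr_eq0 -lin_evalN gt_eqF // (growing_rec_cone_gt0 Ax0 grow Cv) ?oppr_eq0.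
split => [FH v Fv|hF v Fv]; have [trH_lin lin_trH] := trHP v nf.
- split; first by move/(trHP _ nf0) => [_ /eqP]; rewrite (negbTE (f0F v Fv)).
  by rewrite /hfun (trH_lin (FH v Fv)).2 mul0r.
- apply: lin_trH; split; first by case: (tr_pm_rec_cone trF Fv).
  have [_ /eqP] := hF v Fv.
  by rewrite /hfun mulf_eq0 invr_eq0 (negbTE (f0F v Fv)) orbF => /eqP.
Qed.

End Characterizations.

Unset Implicit Arguments. Set Strict Implicit. Set Printing Implicit Defensive.

Theorem lemma8 (R : realType) (n : nat) (A : seq (aff R n)) (f0 f : aff R n)
    (alpha : R[i]) (Delta : set 'rV[R]_n) (g : 'rV[R]_n -> R[i]) :
  arrangement A -> essential A -> nonconstant f0 ->
  hyperplane_of A f ->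
  is_domain A Delta -> growing f0 Delta ->
  branch f alpha Delta g ->
  forall F : set 'rV[R]_n, is_tr A Delta F ->
  [/\ f_bounded_on f Delta <-> F `<=` trH f,
      F `<=` trH f <-> h_vanishes_on f f0 F &
      f_bounded_on f Delta ->
        exists T : R, forall t : R, T <= t ->
          exists c : R[i],
            ext_value (arr_t A f0 t) f g (Delta `&` [set x | aff_eval f0 x < t]) c /\
            ext_value A f g Delta c].
Proof.
move=> _ _ nf0 Hf [x0 Ax0 ->] grow br F trF.
rewrite component_chamber // in grow br trF *.
have nf : nonconstant f by case: Hf.
have bndE := bounded_iff_rec_cone_orth Ax0 Hf.
have trE := tr_sub_trH_iff Ax0 nf trF.
split; first exact: iff_trans bndE (iff_sym trE).
  exact (tr_sub_trH_iff_h_vanishes Ax0 nf nf0 grow trF).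
move=> /bndE frec.
have [p [pD pmax pface]] := hyperplane_abs_max Ax0 Hf frec.
have [th gE] := branch_log_abs (a := x0) (chamber_connected Ax0) (chamber_x0 Ax0)
  (hyperplane_neq0 Hf) br.
exists (aff_eval f0 p + 1) => t tp.
exists (cexp (alpha * ((ln `|aff_eval f p|) +i* th)%C)).
split; [apply: ext_value_truncated | apply: ext_value_chamber] => //; lra.
Qed.
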